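(* Let $(b,c)$ be a connected canonically compactifiable weighted graph over $X$, and let $K$ and $j:X\to K$ be as in the context. Then $j(X)$ is a dense open subset of $K$; in fact, for every $x\in X$ the singleton $\{j(x)\}$ is open in $K$.
   Context: Let $X$ be a countably infinite set. A weighted graph $(b,c)$ over $X$ consists of a symmetric $b:X\times X\to[0,\infty)$ with $b(x,x)=0$ and $\sum_{y}b(x,y)<\infty$ for all $x$, and $c:X\to[0,\infty)$; it is connected if any two distinct vertices are joined by a finite sequence of pairwise distinct vertices with consecutive ones satisfying $b>0$. Let $\widetilde Q(f)=\frac12\sum_{x,y}b(x,y)|f(x)-f(y)|^2+\sum_x c(x)|f(x)|^2$ and $\widetilde D=\{f:X\to\mathbb C:\widetilde Q(f)<\infty\}$. The graph is canonically compactifiable if $\widetilde D\subseteq\ell^\infty(X)$; then $\widetilde D$ is an algebra. Let $\mathcal A$ be the sup-norm closure of $\widetilde D$ in $\ell^\infty(X)$ and $\mathcal A^+$ the smallest $C^*$-subalgebra of $\ell^\infty(X)$ containing $\mathcal A$ and the constant function $1$. Let $K$ be the set of characters (nonzero multiplicative linear functionals $\mathcal A^+\to\mathbb C$) with the weak-$*$ topology, a compact Hausdorff space. Define $j:X\to K$ by $j(x)=\delta_x$, $\delta_x(f)=f(x)$. *)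

From Stdlib Require Import Reals List.
Import ListNotations.
Open Scope R_scope.

Definition C : Type := (R * R)%type.
Definition Cre (z : C) : R := fst z.
Definition Cim (z : C) : R := snd z.
Definition C0 : C := (0, 0).
Definition C1 : C := (1, 0).
Definition Cadd (z w : C) : C := (fst z + fst w, snd z + snd w).
Definition Copp (z : C) : C := (- fst z, - snd z).
Definition Csub (z w : C) : C := Cadd z (Copp w).
Definition Cmul (z w : C) : C :=
  (fst z * fst w - snd z * snd w, fst z * snd w + snd z * fst w).
Definition Cconj (z : C) : C := (fst z, - snd z).
Definition Cnorm2 (z : C) : R := fst z * fst z + snd z * snd z.
Definition Cnorm (z : C) : R := sqrt (Cnorm2 z).

Fixpoint lsum {I : Type} (a : I -> R) (l : list I) : R :=
  match l with
  | [] => 0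
  | i :: l' => a i + lsum a l'
  end.

(** A family of nonnegative reals indexed by an arbitrary (countable) type has
    finite sum iff its finite partial sums (over duplicate-free lists) are
    bounded. *)
Definition summable {I : Type} (a : I -> R) : Prop :=
  exists M : R, forall l : list I, NoDup l -> lsum a l <= M.

Definition countably_infinite (X : Type) : Prop :=
  exists e : nat -> X,
    (forall n m, e n = e m -> n = m) /\ (forall x, exists n, e n = x).

Definition weighted_graph {X : Type} (b : X -> X -> R) (c : X -> R) : Prop :=
  (forall x y, 0 <= b x y) /\
  (forall x y, b x y = b y x) /\
  (forall x, b x x = 0) /\
  (forall x, summable (b x)) /\
  (forall x, 0 <= c x).

Fixpoint is_chain {X : Type} (b : X -> X -> R) (l : list X) : Prop :=
  match l with
  | x :: ((y :: _) as l') => 0 < b x y /\ is_chain b l'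
  | _ => True
  end.

Definition connected_graph {X : Type} (b : X -> X -> R) : Prop :=
  forall x y : X, x <> y ->
    exists l : list X,
      NoDup (x :: l ++ [y]) /\ is_chain b (x :: l ++ [y]).

Definition bounded {X : Type} (f : X -> C) : Prop :=
  exists M : R, forall x, Cnorm (f x) <= M.

(** f ∈ D~ : Q~(f) < ∞, i.e. both (nonnegative) parts of Q~(f) are finite *)
Definition in_Dtilde {X : Type} (b : X -> X -> R) (c : X -> R) (f : X -> C)
  : Prop :=
  summable (fun p : X * X =>
              b (fst p) (snd p) * Cnorm2 (Csub (f (fst p)) (f (snd p)))) /\
  summable (fun x => c x * Cnorm2 (f x)).

Definition canonically_compactifiable {X : Type}
  (b : X -> X -> R) (c : X -> R) : Prop :=
  forall f : X -> C, in_Dtilde b c f -> bounded f.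

Definition fadd {X : Type} (f g : X -> C) : X -> C := fun x => Cadd (f x) (g x).
Definition fscale {X : Type} (a : C) (f : X -> C) : X -> C := fun x => Cmul a (f x).
Definition fmul {X : Type} (f g : X -> C) : X -> C := fun x => Cmul (f x) (g x).
Definition fconj {X : Type} (f : X -> C) : X -> C := fun x => Cconj (f x).
Definition fone {X : Type} : X -> C := fun _ => C1.

Definition sup_closure {X : Type} (S : (X -> C) -> Prop) (g : X -> C) : Prop :=
  bounded g /\
  forall eps : R, 0 < eps ->
    exists f, S f /\ forall x, Cnorm (Csub (f x) (g x)) <= eps.

Definition algA {X : Type} (b : X -> X -> R) (c : X -> R) : (X -> C) -> Prop :=
  sup_closure (in_Dtilde b c).

Definition Cstar_subalgebra {X : Type} (S : (X -> C) -> Prop) : Prop :=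
  (forall f, S f -> bounded f) /\
  S (fun _ => C0) /\
  (forall f g, S f -> S g -> S (fadd f g)) /\
  (forall a f, S f -> S (fscale a f)) /\
  (forall f g, S f -> S g -> S (fmul f g)) /\
  (forall f, S f -> S (fconj f)) /\
  (forall g, sup_closure S g -> S g).

Definition algAplus {X : Type} (b : X -> X -> R) (c : X -> R) (f : X -> C)
  : Prop :=
  forall S : (X -> C) -> Prop,
    Cstar_subalgebra S -> (forall g, algA b c g -> S g) -> S fone -> S f.

(** * Characters of 𝒜^+.  A functional is represented by a map
    (X -> C) -> C; only its values on 𝒜^+ are relevant. *)
Definition is_character {X : Type} (b : X -> X -> R) (c : X -> R)
  (phi : (X -> C) -> C) : Prop :=
  (forall f g, algAplus b c f -> algAplus b c g ->
     phi (fadd f g) = Cadd (phi f) (phi g)) /\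
  (forall a f, algAplus b c f -> phi (fscale a f) = Cmul a (phi f)) /\
  (forall f g, algAplus b c f -> algAplus b c g ->
     phi (fmul f g) = Cmul (phi f) (phi g)) /\
  (exists f, algAplus b c f /\ phi f <> C0).

(** j(x) = δ_x *)
Definition delta {X : Type} (x : X) : (X -> C) -> C := fun f => f x.

(** two functionals represent the same character iff they agree on 𝒜^+ *)
Definition same_char {X : Type} (b : X -> X -> R) (c : X -> R)
  (phi psi : (X -> C) -> C) : Prop :=
  forall f, algAplus b c f -> phi f = psi f.

(** Open subsets of K (weak-* topology): a set U of characters (required to be
    invariant under same_char) is open iff every phi ∈ U has a basic
    weak-* neighbourhood { psi ∈ K : |psi f_i - phi f_i| < eps, i } inside U,
    with f_1,...,f_n ∈ 𝒜^+. *)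
Definition weakstar_open {X : Type} (b : X -> X -> R) (c : X -> R)
  (U : ((X -> C) -> C) -> Prop) : Prop :=
  (forall phi psi, is_character b c phi -> is_character b c psi ->
     same_char b c phi psi -> U phi -> U psi) /\
  forall phi, is_character b c phi -> U phi ->
    exists (fs : list (X -> C)) (eps : R),
      0 < eps /\ (forall f, In f fs -> algAplus b c f) /\
      forall psi, is_character b c psi ->
        (forall f, In f fs -> Cnorm (Csub (psi f) (phi f)) < eps) -> U psi.

Definition jX {X : Type} (b : X -> X -> R) (c : X -> R)
  (phi : (X -> C) -> C) : Prop :=
  exists x : X, same_char b c phi (delta x).

Definition j_singleton {X : Type} (b : X -> X -> R) (c : X -> R) (x : X)
  (phi : (X -> C) -> C) : Prop :=
  same_char b c phi (delta x).

Definition weakstar_dense {X : Type} (b : X -> X -> R) (c : X -> R)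
  (D : ((X -> C) -> C) -> Prop) : Prop :=
  forall U, weakstar_open b c U ->
    (exists phi, is_character b c phi /\ U phi) ->
    exists phi, is_character b c phi /\ U phi /\ D phi.

From Pilot Require Import Defs.
From Stdlib Require Import Reals List Lra Psatz.
From Stdlib Require Import ClassicalDescription Classical FunctionalExtensionality.
(* re-import so that Defs.C1 and Defs.C shadow the homonyms of Reals *)
Import Defs.
Import ListNotations.
Open Scope R_scope.

(** 1. Every indicator function 1_x lies in D~: its energy is at most
       2 ∑_y b(x,y) < ∞.  Since 1_x is idempotent, every character ψ takes the
       value 0 or 1 on it, and ψ(1_x) = 1 forces ψ = δ_x on 𝒜^+
       (because f·1_x = f(x)·1_x).  Hence {ψ : |ψ(1_x) - 1| < 1} = {δ_x} is a
       basic weak-* neighbourhood: each {j(x)}, and so j(X), is open.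

    2. 𝒜^+ is inverse-closed for real functions bounded below by some d > 0:
       the inverse is a uniform limit of geometric (Neumann) series.  Given a
       character φ and f_1,...,f_n ∈ 𝒜^+, the function G = ∑ |f_i - φ(f_i)|²
       lies in 𝒜^+ with φ(G) = 0, so G is not invertible in 𝒜^+ and hence
       takes values below any ε² > 0: some δ_x lies in every basic
       neighbourhood of φ, i.e. j(X) is dense. *)

Lemma Cnorm2_ge0 z : 0 <= Cnorm2 z.
Proof. destruct z as [u v]; unfold Cnorm2; simpl; nra. Qed.

Lemma Cnorm_ge0 z : 0 <= Cnorm z.
Proof. apply sqrt_pos. Qed.

Lemma Cnorm_sq z : Cnorm z * Cnorm z = Cnorm2 z.
Proof. apply sqrt_sqrt, Cnorm2_ge0. Qed.

Lemma Cnorm_real u : Cnorm (u, 0) = Rabs u.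
Proof.
  unfold Cnorm, Cnorm2; simpl.
  replace (u * u + 0 * 0) with (Rsqr u) by (unfold Rsqr; ring).
  apply sqrt_Rsqr_abs.
Qed.

Lemma Cnorm_lt_of_Cnorm2 z e : 0 <= e -> Cnorm2 z < e * e -> Cnorm z < e.
Proof. intros He H. pose proof (Cnorm_sq z). pose proof (Cnorm_ge0 z). nra. Qed.

Lemma Cnorm2_mul z w : Cnorm2 (Cmul z w) = Cnorm2 z * Cnorm2 w.
Proof. destruct z, w; unfold Cnorm2, Cmul; simpl; ring. Qed.

Lemma Cnorm_sub_self z : Cnorm (Csub z z) = 0.
Proof.
  destruct z as [u v]; unfold Csub, Cadd, Copp; simpl.
  replace (u + - u) with 0 by ring. replace (v + - v) with 0 by ring.
  rewrite Cnorm_real. apply Rabs_R0.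
Qed.

Lemma Cmul_1r z : Cmul z C1 = z.
Proof. destruct z; unfold Cmul, C1; simpl; f_equal; ring. Qed.

Lemma Cmul_0l z : Cmul C0 z = C0.
Proof. destruct z; unfold Cmul, C0; simpl; f_equal; ring. Qed.

Lemma Cmul_0r z : Cmul z C0 = C0.
Proof. destruct z; unfold Cmul, C0; simpl; f_equal; ring. Qed.

Lemma C1_neq_C0 : C1 <> C0.
Proof. unfold C1, C0; intros H; injection H; lra. Qed.

Lemma C_idempotent z : Cmul z z = z -> z = C0 \/ z = C1.
Proof.
  destruct z as [u v]; unfold Cmul; simpl; intros H; injection H as Hre Him.
  assert (Hv : v = 0).
  { destruct (Req_dec v 0) as [|Hv]; auto.
    assert (Hu : (2 * u - 1) * v = 0) by lra.
    apply Rmult_integral in Hu as [Hu|Hu]; [|contradiction].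
    assert (u = / 2) by lra. subst u. nra. }
  subst v. assert (Hu : u * (u - 1) = 0) by lra.
  apply Rmult_integral in Hu as [Hu|Hu]; [left|right]; unfold C0, C1; f_equal; lra.
Qed.

Lemma bounded_Cnorm2 {X} (f : X -> C) :
  bounded f <-> exists B, forall x, Cnorm2 (f x) <= B.
Proof.
  split.
  - intros [M HM]. exists (M * M). intros x. rewrite <- Cnorm_sq.
    specialize (HM x). pose proof (Cnorm_ge0 (f x)). nra.
  - intros [B HB]. exists (sqrt B). intros x. apply sqrt_le_1_alt, HB.
Qed.

Lemma lsum_le {I} (a a' : I -> R) l :
  (forall i, a i <= a' i) -> lsum a l <= lsum a' l.
Proof. intros H; induction l as [|i l IH]; simpl; [lra|]. specialize (H i); lra. Qed.

Lemma lsum_plus {I} (a a' : I -> R) l :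
  lsum (fun i => a i + a' i) l = lsum a l + lsum a' l.
Proof. induction l; simpl; lra. Qed.

Lemma lsum_ge0 {I} (a : I -> R) l : (forall i, 0 <= a i) -> 0 <= lsum a l.
Proof. intros H; induction l as [|i l IH]; simpl; [lra|]. specialize (H i); lra. Qed.

Lemma lsum_ge_term {I} (a : I -> R) l i0 :
  (forall i, 0 <= a i) -> In i0 l -> a i0 <= lsum a l.
Proof.
  intros H Hin. induction l as [|j l IH]; simpl in *; [contradiction|].
  destruct Hin as [<-|Hin].
  - pose proof (lsum_ge0 a l H). lra.
  - specialize (IH Hin). specialize (H j). lra.
Qed.

Lemma summable_le {I} (a a' : I -> R) :
  (forall i, a i <= a' i) -> summable a' -> summable a.
Proof.
  intros H [M HM]. exists M. intros l Hl. eapply Rle_trans; [apply lsum_le, H|auto].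
Qed.

Lemma summable_plus {I} (a a' : I -> R) :
  summable a -> summable a' -> summable (fun i => a i + a' i).
Proof.
  intros [M HM] [M' HM']. exists (M + M'). intros l Hl.
  rewrite lsum_plus. specialize (HM l Hl). specialize (HM' l Hl). lra.
Qed.

Lemma summable_single {I} (a : I -> R) (x : I) :
  (forall y, y <> x -> a y = 0) -> summable a.
Proof.
  intros Hz. exists (Rabs (a x)). intros l Hl.
  assert (Hout : forall l, ~ In x l -> lsum a l = 0).
  { induction l0 as [|y l0 IH]; simpl; intros Hn; [reflexivity|].
    rewrite Hz by (intros ->; apply Hn; left; auto). rewrite IH by auto. ring. }
  induction Hl as [|y l Hy Hl IH]; simpl; [apply Rabs_pos|].
  destruct (excluded_middle_informative (y = x)) as [->|Hne].
  - rewrite Hout by auto. pose proof (Rle_abs (a x)). lra.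
  - rewrite Hz by auto. lra.
Qed.

(** Restricting a summable family F : J -> R to the fibre {p : pr1 p = x} of a
    family indexed by pairs keeps it summable, provided (pr1, pr2) is
    injective: on a duplicate-free list the fibre sum is a sum of F over a
    duplicate-free list. *)
Lemma summable_fibre {I J} (pr1 pr2 : I -> J) (x : J) (F : J -> R) :
  (forall p q, pr1 p = pr1 q -> pr2 p = pr2 q -> p = q) -> summable F ->
  summable (fun p => if excluded_middle_informative (pr1 p = x) then F (pr2 p) else 0).
Proof.
  intros Hinj [M HM]. exists M. intros l Hl.
  pose (inx := fun p => if excluded_middle_informative (pr1 p = x) then true else false).
  assert (Hsum : forall l, lsum (fun p => if excluded_middle_informative (pr1 p = x)
                                    then F (pr2 p) else 0) l = lsum F (map pr2 (filter inx l))).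
  { unfold inx; induction l0 as [|p l0 IH]; simpl; [reflexivity|].
    destruct (excluded_middle_informative (pr1 p = x)); simpl; rewrite IH; [reflexivity|ring]. }
  rewrite Hsum. apply HM. clear Hsum.
  unfold inx; induction Hl as [|p l Hp Hl IH]; simpl; [constructor|].
  destruct (excluded_middle_informative (pr1 p = x)) as [Ep|Ep]; simpl; auto.
  constructor; auto. intros Hin. apply in_map_iff in Hin as [q [Hq Hin]].
  apply filter_In in Hin as [Hin Hd].
  destruct (excluded_middle_informative (pr1 q = x)); [|discriminate].
  assert (q = p) by (apply Hinj; congruence). subst; contradiction.
Qed.

(** 𝒜^+ is the intersection of all C*-subalgebras of ℓ^∞(X) containing 𝒜 and
    1, so it inherits every closure property shared by those subalgebras. *)

Section AlgebraAplus.
Context {X : Type} (b : X -> X -> R) (c : X -> R).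

Lemma aplus_one : algAplus b c fone.
Proof. intros S _ _ H1; exact H1. Qed.

Lemma aplus_of_A g : algA b c g -> algAplus b c g.
Proof. intros Hg S _ HA _; auto. Qed.

Lemma aplus_add f g : algAplus b c f -> algAplus b c g -> algAplus b c (fadd f g).
Proof.
  intros Hf Hg S HS HA H1. pose proof HS as (_ & _ & Hadd & _).
  apply Hadd; [apply Hf|apply Hg]; auto.
Qed.

Lemma aplus_scale a f : algAplus b c f -> algAplus b c (fscale a f).
Proof.
  intros Hf S HS HA H1. pose proof HS as (_ & _ & _ & Hscale & _). apply Hscale, Hf; auto.
Qed.

Lemma aplus_mul f g : algAplus b c f -> algAplus b c g -> algAplus b c (fmul f g).
Proof.
  intros Hf Hg S HS HA H1. pose proof HS as (_ & _ & _ & _ & Hmul & _).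
  apply Hmul; [apply Hf|apply Hg]; auto.
Qed.

Lemma aplus_conj f : algAplus b c f -> algAplus b c (fconj f).
Proof.
  intros Hf S HS HA H1. pose proof HS as (_ & _ & _ & _ & _ & Hconj & _). apply Hconj, Hf; auto.
Qed.

Lemma aplus_closed g : sup_closure (algAplus b c) g -> algAplus b c g.
Proof.
  intros [Hg Happrox] S HS HA H1. pose proof HS as (_ & _ & _ & _ & _ & _ & Hclosed).
  apply Hclosed. split; auto.
  intros e he. destruct (Happrox e he) as [f [Hf Hfe]].
  exists f; split; [apply Hf; auto|exact Hfe].
Qed.

Lemma bounded_Cstar : Cstar_subalgebra (@bounded X).
Proof.
  repeat split.
  - auto.
  - exists 0; intros y. unfold C0; rewrite Cnorm_real, Rabs_R0; lra.
  - intros f g Hf Hg.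
    apply bounded_Cnorm2 in Hf as [B1 H1]. apply bounded_Cnorm2 in Hg as [B2 H2].
    apply bounded_Cnorm2. exists (2 * (B1 + B2)). intros x.
    specialize (H1 x). specialize (H2 x). unfold fadd.
    destruct (f x) as [u1 v1], (g x) as [u2 v2]; unfold Cnorm2, Cadd in *; simpl in *.
    pose proof (pow2_ge_0 (u1 - u2)); pose proof (pow2_ge_0 (v1 - v2)); nra.
  - intros a f Hf. apply bounded_Cnorm2 in Hf as [B HB]. apply bounded_Cnorm2.
    exists (Cnorm2 a * B). intros x. unfold fscale. rewrite Cnorm2_mul.
    apply Rmult_le_compat_l; [apply Cnorm2_ge0|auto].
  - intros f g Hf Hg.
    apply bounded_Cnorm2 in Hf as [B1 H1]. apply bounded_Cnorm2 in Hg as [B2 H2].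
    apply bounded_Cnorm2. exists (B1 * B2). intros x. unfold fmul. rewrite Cnorm2_mul.
    specialize (H1 x). specialize (H2 x).
    pose proof (Cnorm2_ge0 (f x)). pose proof (Cnorm2_ge0 (g x)). nra.
  - intros f Hf. apply bounded_Cnorm2 in Hf as [B HB]. apply bounded_Cnorm2.
    exists B. intros x. specialize (HB x). unfold fconj.
    destruct (f x); unfold Cnorm2, Cconj in *; simpl in *; nra.
  - intros g [Hg _]; exact Hg.
Qed.

Lemma aplus_bounded f : algAplus b c f -> bounded f.
Proof.
  intros Hf. apply Hf.
  - apply bounded_Cstar.
  - intros g [Hg _]; exact Hg.
  - exists 1. intros y. unfold fone, C1. rewrite Cnorm_real, Rabs_R1; lra.
Qed.

End AlgebraAplus.

Definition indicator {X : Type} (x : X) : X -> C :=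
  fun y => if excluded_middle_informative (y = x) then C1 else C0.

(** 1_x has finite energy: |1_x(y) - 1_x(z)|² b(y,z) is bounded by the sum of
    the row and the column x of b, both summable. *)
Lemma indicator_Dtilde {X} (b : X -> X -> R) (c : X -> R) (x : X) :
  weighted_graph b c -> in_Dtilde b c (indicator x).
Proof.
  intros (Hb0 & Hbsym & _ & Hsum & _). split.
  - assert (Hpair : forall p q : X * X, fst p = fst q -> snd p = snd q -> p = q).
    { intros [] [] ? ?; simpl in *; congruence. }
    eapply summable_le; [|apply summable_plus;
      [apply (summable_fibre fst snd x (b x)); auto
      |apply (summable_fibre snd fst x (b x)); auto]].
    intros [y z]; simpl. unfold indicator.
    destruct (excluded_middle_informative (y = x)) as [->|Hy];
    destruct (excluded_middle_informative (z = x)) as [->|Hz];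
    unfold Cnorm2, Csub, Cadd, Copp, C1, C0; simpl.
    + pose proof (Hb0 x x); nra.
    + lra.
    + rewrite (Hbsym y x); lra.
    + pose proof (Hb0 x y); pose proof (Hb0 y z); nra.
  - apply (summable_single _ x). intros y Hy. unfold indicator.
    destruct (excluded_middle_informative (y = x)); [contradiction|].
    unfold Cnorm2, C0; simpl; ring.
Qed.

Lemma indicator_aplus {X} (b : X -> X -> R) (c : X -> R) (x : X) :
  weighted_graph b c -> algAplus b c (indicator x).
Proof.
  intros hG. apply aplus_of_A. split.
  - exists 1. intros y. unfold indicator.
    destruct (excluded_middle_informative (y = x)); unfold C1, C0;
      rewrite Cnorm_real; [rewrite Rabs_R1|rewrite Rabs_R0]; lra.
  - intros e he. exists (indicator x). split; [apply indicator_Dtilde; auto|].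
    intros y. rewrite Cnorm_sub_self. lra.
Qed.

Section Characters.
Context {X : Type} (b : X -> X -> R) (c : X -> R).

Lemma delta_character x : is_character b c (delta x).
Proof.
  repeat split; auto.
  exists fone. split; [apply aplus_one|]. apply C1_neq_C0.
Qed.

Lemma character_idempotent phi f :
  is_character b c phi -> algAplus b c f -> fmul f f = f ->
  phi f = C0 \/ phi f = C1.
Proof.
  intros (_ & _ & Hmul & _) Hf Hidem. apply C_idempotent.
  rewrite <- Hmul, Hidem; auto.
Qed.

Lemma character_one phi : is_character b c phi -> phi fone = C1.
Proof.
  intros Hphi. pose proof Hphi as (_ & _ & Hmul & f & Hf & Hnz).
  assert (Hone : fmul fone fone = @fone X).
  { apply functional_extensionality; intros y. apply Cmul_1r. }
  destruct (character_idempotent phi fone Hphi (aplus_one b c) Hone) as [H0|]; auto.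
  exfalso. apply Hnz.
  assert (Ef : fmul f fone = f).
  { apply functional_extensionality; intros y. apply Cmul_1r. }
  rewrite <- Ef, Hmul by auto using aplus_one. rewrite H0. apply Cmul_0r.
Qed.

Hypothesis hG : weighted_graph b c.

(** a character with ψ(1_x) = 1 is δ_x on 𝒜^+, since f·1_x = f(x)·1_x *)
Lemma character_at_vertex x psi :
  is_character b c psi -> psi (indicator x) = C1 -> same_char b c psi (delta x).
Proof.
  intros (_ & Hscale & Hmul & _) Hone f Hf. unfold delta.
  assert (Eloc : fmul f (indicator x) = fscale (f x) (indicator x)).
  { apply functional_extensionality; intros y. unfold fmul, fscale, indicator.
    destruct (excluded_middle_informative (y = x)) as [->|]; auto.
    rewrite !Cmul_0r; auto. }
  assert (E : Cmul (psi f) (psi (indicator x)) = Cmul (f x) (psi (indicator x))).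
  { rewrite <- Hmul, Eloc, Hscale by auto using indicator_aplus. reflexivity. }
  rewrite Hone, !Cmul_1r in E. exact E.
Qed.

Lemma vertex_neighbourhood x psi :
  is_character b c psi -> Cnorm (Csub (psi (indicator x)) C1) < 1 ->
  same_char b c psi (delta x).
Proof.
  intros Hpsi Hnear. apply character_at_vertex; auto.
  assert (Hidem : fmul (indicator x) (indicator x) = indicator x).
  { apply functional_extensionality; intros y. unfold fmul, indicator.
    destruct (excluded_middle_informative (y = x)); [apply Cmul_1r|apply Cmul_0r]. }
  destruct (character_idempotent psi (indicator x) Hpsi (indicator_aplus b c x hG) Hidem)
    as [H0|]; auto.
  exfalso. rewrite H0 in Hnear.
  replace (Csub C0 C1) with (-1, 0) in Hnear by (unfold Csub, Cadd, Copp, C0, C1; simpl; f_equal; ring).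
  rewrite Cnorm_real, Rabs_left in Hnear; lra.
Qed.

Lemma vertex_isolated x phi : same_char b c phi (delta x) ->
  exists (fs : list (X -> C)) (eps : R),
    0 < eps /\ (forall f, In f fs -> algAplus b c f) /\
    forall psi, is_character b c psi ->
      (forall f, In f fs -> Cnorm (Csub (psi f) (phi f)) < eps) ->
      same_char b c psi (delta x).
Proof.
  intros Hphi. exists [indicator x], 1. split; [lra|]. split.
  - intros f [<-|[]]. apply indicator_aplus; auto.
  - intros psi Hpsi Hnear. apply vertex_neighbourhood; auto.
    specialize (Hnear (indicator x) (or_introl eq_refl)).
    rewrite Hphi in Hnear by (apply indicator_aplus; auto).
    unfold delta, indicator in Hnear.
    destruct (excluded_middle_informative (x = x)); [exact Hnear|congruence].
Qed.

Lemma singleton_open x : weakstar_open b c (j_singleton b c x).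
Proof.
  split.
  - intros phi psi _ _ Hsame Hphi f Hf. rewrite <- Hsame by auto. apply Hphi; auto.
  - intros phi _ Hphi. exact (vertex_isolated x phi Hphi).
Qed.

Lemma jX_open : weakstar_open b c (jX b c).
Proof.
  split.
  - intros phi psi _ _ Hsame [x Hphi]. exists x.
    intros f Hf. rewrite <- Hsame by auto. apply Hphi; auto.
  - intros phi _ [x Hphi].
    destruct (vertex_isolated x phi Hphi) as (fs & eps & He & Hfs & Hnbhd).
    exists fs, eps. repeat split; auto.
    intros psi Hpsi Hnear. exists x. apply Hnbhd; auto.
Qed.

End Characters.

Definition creal {X : Type} (g : X -> R) : X -> C := fun y => (g y, 0).

Fixpoint geom (r : R) (N : nat) : R :=
  match N with O => 0 | S N => r ^ N + geom r N end.

Lemma geom_closed_form r N : geom r N * (1 - r) = 1 - r ^ N.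
Proof. induction N as [|N IH]; simpl; [ring|]. rewrite Rmult_plus_distr_r, IH. ring. Qed.

Lemma geom_error r q N :
  0 <= r <= q -> q < 1 -> Rabs (geom r N - / (1 - r)) <= q ^ N / (1 - q).
Proof.
  intros Hr Hq. pose proof (geom_closed_form r N) as Hgeom.
  replace (geom r N - / (1 - r)) with (- (r ^ N / (1 - r)))
    by (apply Rmult_eq_reg_r with (1 - r); [|lra]; field_simplify; lra).
  rewrite Rabs_Ropp, Rabs_right.
  2: { apply Rle_ge, Rmult_le_pos; [apply pow_le|left; apply Rinv_0_lt_compat]; lra. }
  apply Rle_trans with (q ^ N / (1 - r)).
  - apply Rmult_le_compat_r; [left; apply Rinv_0_lt_compat; lra|].
    apply pow_incr; lra.
  - apply Rmult_le_compat_l; [apply pow_le; lra|].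
    apply Rinv_le_contravar; lra.
Qed.

Lemma div_le_1 u v : 0 < v -> u <= v -> u / v <= 1.
Proof.
  intros Hv Huv. apply Rmult_le_reg_r with v; [lra|].
  unfold Rdiv. rewrite Rmult_assoc, Rinv_l by lra. lra.
Qed.

Section InverseClosed.
Context {X : Type} (b : X -> X -> R) (c : X -> R).

Fixpoint fpow (h : X -> C) (k : nat) : X -> C :=
  match k with O => fone | S k => fmul h (fpow h k) end.

Fixpoint neumann (h : X -> C) (N : nat) : X -> C :=
  match N with O => fscale C0 fone | S N => fadd (fpow h N) (neumann h N) end.

Lemma neumann_real (r : X -> R) N y : neumann (creal r) N y = (geom (r y) N, 0).
Proof.
  assert (Hpow : forall k, fpow (creal r) k y = (r y ^ k, 0)).
  { induction k as [|k IH]; simpl; [reflexivity|].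
    unfold fmul. rewrite IH. unfold creal, Cmul; simpl; f_equal; ring. }
  induction N as [|N IH]; simpl.
  - unfold fscale, fone, Cmul, C0, C1; simpl; f_equal; ring.
  - unfold fadd. rewrite IH, Hpow. unfold Cadd; simpl; f_equal; ring.
Qed.

Lemma neumann_aplus h N : algAplus b c h -> algAplus b c (neumann h N).
Proof.
  intros Hh.
  assert (Hpow : forall k, algAplus b c (fpow h k)).
  { induction k; simpl; [apply aplus_one|apply aplus_mul; auto]. }
  induction N; simpl.
  - apply aplus_scale, aplus_one.
  - apply aplus_add; auto.
Qed.

(** if 0 <= r <= q < 1 and r ∈ 𝒜^+, then 1/(1 - r) ∈ 𝒜^+, as the uniform
    limit of the Neumann series *)
Lemma neumann_inverse_aplus (r : X -> R) (q : R) :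
  algAplus b c (creal r) -> 0 <= q < 1 -> (forall y, 0 <= r y <= q) ->
  algAplus b c (creal (fun y => / (1 - r y))).
Proof.
  intros Hr Hq Hrq. apply aplus_closed. split.
  - exists (/ (1 - q)). intros y. unfold creal. rewrite Cnorm_real.
    specialize (Hrq y). rewrite Rabs_right.
    + apply Rinv_le_contravar; lra.
    + left; apply Rinv_0_lt_compat; lra.
  - intros e he.
    destruct (pow_lt_1_zero q ltac:(rewrite Rabs_right; lra) (e * (1 - q)) ltac:(nra))
      as [N HN].
    specialize (HN N (Nat.le_refl N)).
    rewrite Rabs_right in HN by (apply Rle_ge, pow_le; lra).
    exists (neumann (creal r) N). split; [apply neumann_aplus; auto|].
    intros y. rewrite neumann_real. unfold creal, Csub, Cadd, Copp; simpl.
    replace (0 + - 0) with 0 by ring. rewrite Cnorm_real.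
    eapply Rle_trans; [apply geom_error; [apply Hrq|lra]|].
    apply Rmult_le_reg_r with (1 - q); [lra|].
    unfold Rdiv. rewrite Rmult_assoc, Rinv_l by lra. lra.
Qed.

(** if d <= g with d > 0 and g ∈ 𝒜^+, then 1/g ∈ 𝒜^+: writing g = M (1 - r)
    with M >= sup g, the function r = 1 - g/M takes values in [0, 1 - d/M] *)
Lemma inverse_aplus (g : X -> R) (d : R) :
  algAplus b c (creal g) -> 0 < d -> (forall y, d <= g y) ->
  algAplus b c (creal (fun y => / g y)).
Proof.
  intros Hg Hd Hgd.
  destruct (aplus_bounded b c _ Hg) as [B HB].
  set (M := Rmax B d).
  assert (HgM : forall y, g y <= M).
  { intros y. specialize (HB y). unfold creal in HB. rewrite Cnorm_real in HB.
    pose proof (Rle_abs (g y)). pose proof (Rmax_l B d). unfold M; lra. }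
  assert (HdM : d <= M) by apply Rmax_r.
  set (r := fun y => 1 - g y / M).
  assert (Hr : algAplus b c (creal r)).
  { replace (creal r) with (fadd fone (fscale (- / M, 0) (creal g))).
    - apply aplus_add; [apply aplus_one|apply aplus_scale; auto].
    - apply functional_extensionality; intros y.
      unfold fadd, fscale, fone, creal, r, Cadd, Cmul, C1; simpl. f_equal; field; lra. }
  assert (Hrange : forall y, 0 <= r y <= 1 - d / M).
  { intros y. specialize (Hgd y). specialize (HgM y). unfold r. split.
    - assert (g y / M <= 1) by (apply div_le_1; lra). lra.
    - assert (d / M <= g y / M) by (apply Rmult_le_compat_r; [left; apply Rinv_0_lt_compat|]; lra).
      lra. }
  assert (Hq : 0 <= 1 - d / M < 1).
  { assert (0 < d / M) by (apply Rdiv_lt_0_compat; lra).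
    assert (d / M <= 1) by (apply div_le_1; lra). lra. }
  replace (creal (fun y => / g y))
    with (fscale (/ M, 0) (creal (fun y => / (1 - r y)))).
  - apply aplus_scale, (neumann_inverse_aplus r (1 - d / M)); auto.
  - apply functional_extensionality; intros y. specialize (Hgd y).
    unfold fscale, creal, r, Cmul; simpl. f_equal; field; lra.
Qed.

End InverseClosed.

Section Density.
Context {X : Type} (b : X -> X -> R) (c : X -> R).

Lemma character_invertible phi f h :
  is_character b c phi -> algAplus b c f -> algAplus b c h -> fmul f h = fone ->
  phi f <> C0.
Proof.
  intros Hphi Hf Hh Hinv H0. apply C1_neq_C0.
  rewrite <- (character_one b c phi Hphi), <- Hinv.
  destruct Hphi as (_ & _ & Hmul & _). rewrite Hmul, H0 by auto. apply Cmul_0l.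
Qed.

Definition centered (phi : (X -> C) -> C) (f : X -> C) : X -> C :=
  fadd f (fscale (Copp (phi f)) fone).

Lemma centered_aplus phi f : algAplus b c f -> algAplus b c (centered phi f).
Proof. intros Hf. apply aplus_add; auto. apply aplus_scale, aplus_one. Qed.

Lemma centered_character phi f :
  is_character b c phi -> algAplus b c f -> phi (centered phi f) = C0.
Proof.
  intros Hphi Hf. pose proof (character_one b c phi Hphi) as Hone.
  destruct Hphi as (Hadd & Hscale & _). unfold centered.
  rewrite Hadd, Hscale, Hone by auto using aplus_scale, aplus_one.
  destruct (phi f); unfold Cadd, Cmul, Copp, C1, C0; simpl; f_equal; ring.
Qed.

Definition deviation (phi : (X -> C) -> C) (fs : list (X -> C)) (y : X) : R :=
  lsum (fun f => Cnorm2 (Csub (f y) (phi f))) fs.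

Lemma deviation_nil phi : creal (deviation phi []) = fscale C0 fone.
Proof.
  apply functional_extensionality; intros y.
  unfold creal, deviation, fscale, fone, Cmul, C0, C1; simpl; f_equal; ring.
Qed.

Lemma deviation_cons phi f fs :
  creal (deviation phi (f :: fs))
  = fadd (fmul (centered phi f) (fconj (centered phi f))) (creal (deviation phi fs)).
Proof.
  apply functional_extensionality; intros y.
  unfold creal, deviation, fadd, fmul, fconj, centered, fscale, fone; simpl.
  unfold Cadd, Cmul, Cconj, Copp, Cnorm2, Csub, C1; simpl; f_equal; ring.
Qed.

Lemma deviation_aplus_character phi fs :
  is_character b c phi -> (forall f, In f fs -> algAplus b c f) ->
  algAplus b c (creal (deviation phi fs)) /\ phi (creal (deviation phi fs)) = C0.
Proof.
  intros Hphi. pose proof Hphi as (Hadd & Hscale & Hmul & _).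
  induction fs as [|f fs IH]; intros Hfs.
  - rewrite deviation_nil, Hscale by apply aplus_one.
    split; [apply aplus_scale, aplus_one|apply Cmul_0l].
  - assert (Hf : algAplus b c (centered phi f)) by (apply centered_aplus, Hfs; left; auto).
    destruct IH as [IHa IHc]; [intros; apply Hfs; right; auto|].
    rewrite deviation_cons.
    assert (Hsq : algAplus b c (fmul (centered phi f) (fconj (centered phi f))))
      by auto using aplus_mul, aplus_conj.
    split; [apply aplus_add; auto|].
    rewrite Hadd, Hmul, IHc, centered_character by auto using aplus_conj, Hfs, in_eq.
    rewrite Cmul_0l. unfold Cadd, C0; simpl; f_equal; ring.
Qed.

(** every basic weak-* neighbourhood of a character contains some δ_x:
    otherwise the deviation is bounded below by ε², hence invertible in 𝒜^+,
    while φ vanishes on it *)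
Lemma character_approximated phi fs eps :
  is_character b c phi -> (forall f, In f fs -> algAplus b c f) -> 0 < eps ->
  exists x, forall f, In f fs -> Cnorm (Csub (f x) (phi f)) < eps.
Proof.
  intros Hphi Hfs Heps.
  destruct (deviation_aplus_character phi fs Hphi Hfs) as [Hdev Hzero].
  destruct (classic (forall y, eps * eps <= deviation phi fs y)) as [Hbig|Hsmall].
  - exfalso.
    apply (character_invertible phi _ (creal (fun y => / deviation phi fs y)) Hphi Hdev);
      auto.
    + apply (inverse_aplus b c _ (eps * eps)); auto. nra.
    + apply functional_extensionality; intros y. specialize (Hbig y).
      unfold fmul, creal, fone, Cmul, C1; simpl. f_equal; field; nra.
  - apply not_all_ex_not in Hsmall as [x Hx]. apply Rnot_le_lt in Hx.
    exists x. intros f Hf. apply Cnorm_lt_of_Cnorm2; [lra|].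
    eapply Rle_lt_trans; [|exact Hx].
    apply (lsum_ge_term (fun f => Cnorm2 (Csub (f x) (phi f)))); auto.
    intros; apply Cnorm2_ge0.
Qed.

Lemma jX_dense : weakstar_dense b c (jX b c).
Proof.
  intros U [_ HUopen] [phi [Hphi HU]].
  destruct (HUopen phi Hphi HU) as (fs & eps & Heps & Hfs & Hnbhd).
  destruct (character_approximated phi fs eps Hphi Hfs Heps) as [x Hx].
  exists (delta x). split; [apply delta_character|]. split.
  - apply Hnbhd; [apply delta_character|exact Hx].
  - exists x. intros f _. reflexivity.
Qed.

End Density.

Theorem mainTheorem10 (X : Type) (b : X -> X -> R) (c : X -> R)
  (hX : countably_infinite X)
  (hG : weighted_graph b c)
  (hconn : connected_graph b)
  (hcc : canonically_compactifiable b c) :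
  (forall x : X, is_character b c (delta x)) /\
  weakstar_open b c (jX b c) /\
  weakstar_dense b c (jX b c) /\
  (forall x : X, weakstar_open b c (j_singleton b c x)).
Proof.
  split; [intros x; apply delta_character|].
  split; [apply jX_open; exact hG|].
  split; [apply jX_dense|].
  intros x. apply singleton_open; exact hG.
Qed.
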